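(* Let $H$ be a $6\times 6$ complex Hadamard matrix. Then $H$ is equivalent to a member of the family $F_6^{(2)}$ if and only if $\eta_c(H)\neq 0$ or $\eta_r(H)\neq 0$.
   Context: A $d\times d$ complex Hadamard matrix has unimodular entries and pairwise orthogonal columns. Two complex Hadamard matrices $H_1,H_2$ are equivalent if $H_2=D_1P_1H_1P_2D_2$ with $D_1,D_2$ diagonal unitary and $P_1,P_2$ permutation matrices. The dephased form of $H$ is the unique matrix $D_1HD_2$ ($D_1,D_2$ diagonal unitary) whose first row and first column consist of $1$'s. Two distinct columns $C_A,C_B$ form an ER pair if $\overline{(C_A)_j}(C_B)_j\in\{1,-1\}$ for every $j$ (analogously for rows). $\eta_c(H)$ (resp. $\eta_r(H)$) is the maximal number of pairwise disjoint ER pairs of columns (resp. rows) of the dephased form of $H$. Let $F_6$ be the Fourier matrix $(F_6)_{j,k}=\omega^{jk}$, $\omega=e^{2\pi i/6}$, $j,k=0,\dots,5$. For $a,b\in\mathbb{R}$ let $R(a,b)$ be the real $6\times6$ matrix with $R(a,b)_{j,k}=a$ if $j$ is odd and $k\in\{1,4\}$, $R(a,b)_{j,k}=b$ if $j$ is odd and $k\in\{2,5\}$, and $R(a,b)_{j,k}=0$ otherwise. The family $F_6^{(2)}$ is the set of matrices $F_6\circ\exp(iR(a,b))$ and $F_6\circ\exp(iR(a,b)^t)$ for $a,b\in\mathbb{R}$, where $\circ$ is the entrywise product and $\exp$ is applied entrywise. *)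

From HB Require Import structures.
From mathcomp Require Import all_boot all_order all_algebra all_fingroup.
From mathcomp Require Import reals trigo.
From mathcomp Require Import complex.
Set Implicit Arguments. Unset Strict Implicit. Unset Printing Implicit Defensive.
Import Order.TTheory GRing.Theory Num.Theory.
Local Open Scope ring_scope.
Local Open Scope complex_scope.

Section Hadamard.
Variable R : realType.
Local Notation C := R[i].

Definition expi (t : R) : C := cos t +i* sin t.

Definition unimodular (z : C) : Prop := `|z| = 1.

Definition is_complex_hadamard (n : nat) (H : 'M[C]_n) : Prop :=
  (forall i j, unimodular (H i j)) /\
  (forall j k : 'I_n, j != k -> \sum_(i < n) (H i j)^* * H i k = 0).

Definition diag_unitary (n : nat) (D : 'M[C]_n) : Prop :=
  exists d : 'rV[C]_n, (forall j, unimodular (d 0 j)) /\ D = diag_mx d.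

Definition is_perm_matrix (n : nat) (P : 'M[C]_n) : Prop :=
  exists s : 'S_n, P = perm_mx s.

Definition hadamard_equiv (n : nat) (H1 H2 : 'M[C]_n) : Prop :=
  exists D1 D2 P1 P2 : 'M[C]_n,
    [/\ diag_unitary D1, diag_unitary D2, is_perm_matrix P1, is_perm_matrix P2
      & H2 = D1 *m P1 *m H1 *m P2 *m D2].

(* The dephased form D1 H D2 with D1 = diag(conj(H i 0) * H 0 0),
   D2 = diag(conj(H 0 j)); for unimodular entries its first row and
   column consist of 1's (and it is the unique such matrix). *)
Definition dephased (n : nat) (H : 'M[C]_n.+1) : 'M[C]_n.+1 :=
  \matrix_(i, j) ((H i 0)^* * H 0 0 * H i j * (H 0 j)^*).

Definition ER_col (n : nat) (K : 'M[C]_n) (a b : 'I_n) : bool :=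
  (a != b) && [forall j, ((K j a)^* * K j b == 1) || ((K j a)^* * K j b == -1)].
Definition ER_row (n : nat) (K : 'M[C]_n) (a b : 'I_n) : bool :=
  (a != b) && [forall j, ((K a j)^* * K b j == 1) || ((K a j)^* * K b j == -1)].

(* a family S of (unordered, represented by a < b) pairs that are ER pairs
   and pairwise disjoint *)
Definition disjoint_ER (n : nat) (er : 'I_n -> 'I_n -> bool)
    (S : {set 'I_n * 'I_n}) : bool :=
  [forall p in S, (p.1 < p.2)%N && er p.1 p.2] &&
  [forall p in S, forall q in S, (p != q) ==>
     [&& p.1 != q.1, p.1 != q.2, p.2 != q.1 & p.2 != q.2]].

Definition eta_c (n : nat) (H : 'M[C]_n.+1) : nat :=
  \max_(S : {set 'I_n.+1 * 'I_n.+1} | disjoint_ER (ER_col (dephased H)) S) #|S|.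
Definition eta_r (n : nat) (H : 'M[C]_n.+1) : nat :=
  \max_(S : {set 'I_n.+1 * 'I_n.+1} | disjoint_ER (ER_row (dephased H)) S) #|S|.

Definition F6 : 'M[C]_6 :=
  \matrix_(j, k) expi (2%:R * pi * (j * k)%:R / 6%:R).

Definition Rab (a b : R) : 'M[R]_6 :=
  \matrix_(j, k)
    if odd j then
      (if (val k == 1%N) || (val k == 4%N) then a
       else if (val k == 2%N) || (val k == 5%N) then b else 0)
    else 0.

Definition F6_dephase (M : 'M[R]_6) : 'M[C]_6 :=
  \matrix_(j, k) (F6 j k * expi (M j k)).

Definition in_F6_2 (K : 'M[C]_6) : Prop :=
  exists a b : R, K = F6_dephase (Rab a b) \/ K = F6_dephase (Rab a b)^T.

End Hadamard.

(* Normalize an ER pair (a, b) of columns: after multiplying rows and columns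
   by phases, column a and row 0 are constant 1 and column b is a +-1 vector,
   with three entries of each sign.  Orthogonality to columns a and b forces
   every other column to read (1, x, x^2) on the rows where column b is 1 and
   u (1, y, y^2) on the rows where it is -1, with x, y primitive cube roots of
   unity.  Orthogonality among these four columns then gives y = x (once the -1
   rows are suitably ordered), and splits the columns into two pairs with equal
   x and opposite u.  What remains are two free phases: the matrix is
   F_6 o exp(i R(a, b)) up to permutations.  Conversely, columns 0 and 3 of such
   a matrix form an ER pair, and ER pairs of the dephased form survive
   equivalence.  Rows reduce to columns by transposition. *)

From HB Require Import structures.
From mathcomp Require Import all_boot all_order all_algebra all_fingroup.
From mathcomp Require Import reals trigo.
From mathcomp Require Import complex.
From mathcomp Require Import ring lra zify.
From Stdlib Require Import FunctionalExtensionality.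
Set Implicit Arguments. Unset Strict Implicit. Unset Printing Implicit Defensive.
Import Order.TTheory GRing.Theory Num.Theory.
Local Open Scope ring_scope.

Lemma big_uniq_enum {R : Type} {idx : R} {op : Monoid.com_law idx}
    {T : finType} (F : T -> R) (s : seq T) :
  uniq s -> size s = #|T| -> \big[op/idx]_i F i = \big[op/idx]_(x <- s) F x.
Proof.
move=> s_uniq s_size; apply: perm_big; apply: uniq_perm => //.
  exact: index_enum_uniq.
move=> x; rewrite mem_index_enum; symmetry.
have s_full : #|[pred y | y \in s]| = #|[pred y : T | true]|.
  by rewrite (card_uniqP s_uniq) s_size; apply: eq_card.
by have /subset_cardP := s_full => /(_ (subset_predT _)) /(_ x).
Qed.

Section UnitModulus.
Variable C : numClosedFieldType.

Lemma unitC_mul (x y : C) :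
  x * x^* = 1 -> y * y^* = 1 -> (x * y) * (x * y)^* = 1.
Proof. by move=> hx hy; rewrite rmorphM mulrACA hx hy mulr1. Qed.

Lemma unitC_conj (x : C) : x * x^* = 1 -> x^* * x^*^* = 1.
Proof. by rewrite conjCK mulrC. Qed.

Lemma unitC_neq0 (x : C) : x * x^* = 1 -> x != 0.
Proof. by apply: contra_eqN => /eqP ->; rewrite mul0r eq_sym oner_eq0. Qed.

Lemma unitC_norm (x : C) : (`|x| = 1) <-> (x * x^* = 1).
Proof.
rewrite -normCK; split=> [-> | /eqP]; first exact: expr1n.
by rewrite sqrp_eq1 // => /eqP.
Qed.

Lemma mul_unitC_l (u x y : C) : u * u^* = 1 -> x = u * u^* * y -> x = y.
Proof. by move=> -> ->; rewrite mul1r. Qed.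

End UnitModulus.

Section PrimitiveSixthRoot.
Variable C : numClosedFieldType.
Variable w : C.
Hypothesis w3 : w ^+ 3 = -1.
Hypothesis w2_neq1 : w ^+ 2 != 1.

Lemma w_exp6 : w ^+ 6 = 1.
Proof. by rewrite (exprM w 3 2) w3 sqrrN expr1n. Qed.

Lemma w_expD6 n : w ^+ (6 + n) = w ^+ n.
Proof. by rewrite exprD w_exp6 mul1r. Qed.

Lemma w_unit : w * w^* = 1.
Proof.
apply/unitC_norm/eqP; rewrite -(@pexpr_eq1 _ _ 3) // -normrX w3.
by rewrite normrN normr1.
Qed.

Lemma w_expX_unit n : w ^+ n * (w ^+ n)^* = 1.
Proof. by rewrite rmorphXn -exprMn w_unit expr1n. Qed.

Lemma cube_roots_sum : 1 + w ^+ 2 + w ^+ 4 = 0.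
Proof.
have : (w ^+ 2 - 1) * (1 + w ^+ 2 + w ^+ 4) = w ^+ 6 - 1 by ring.
rewrite w_exp6 subrr => /eqP; rewrite mulf_eq0 subr_eq0 (negPf w2_neq1).
by move/eqP.
Qed.

Lemma w2_neq_w4 : w ^+ 2 != w ^+ 4.
Proof.
apply/eqP => e; have : w ^+ 2 * (w ^+ 2 - 1) = 0.
  by rewrite mulrBr mulr1 -exprD -e subrr.
move/eqP; rewrite mulf_eq0 subr_eq0 (negPf w2_neq1) orbF expf_eq0 /=.
exact/negP/unitC_neq0/w_unit.
Qed.

Definition prim_cube (p : C) : Prop := p = w ^+ 2 \/ p = w ^+ 4.

Lemma prim_cubeP p : prim_cube p ->
  [/\ p ^+ 3 = 1, 1 + p + p ^+ 2 = 0, p * p^* = 1 & p^* = p ^+ 2].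
Proof.
move=> hp; have p3 : p ^+ 3 = 1.
  by case: hp => ->; rewrite -exprM ?w_exp6 // (w_expD6 6) w_exp6.
have pu : p * p^* = 1 by case: hp => ->; apply: w_expX_unit.
split=> //.
- case: hp => ->; rewrite -exprM; first exact: cube_roots_sum.
  by rewrite (w_expD6 2) -cube_roots_sum; ring.
- have : p ^+ 3 * p^* = p ^+ 2 * (p * p^*) by ring.
  by rewrite p3 pu mul1r mulr1.
Qed.

Lemma prim_cube_other p q : prim_cube p -> prim_cube q -> p != q -> q = p ^+ 2.
Proof.
case=> ->; case=> -> //; rewrite ?eqxx // => _; rewrite -exprM //=.
by rewrite (w_expD6 2).
Qed.

Definition dot_cube (p q : C) : C := 1 + p^* * q + p^* ^+ 2 * q ^+ 2.

Lemma dot_cubeE p q : prim_cube p -> prim_cube q ->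
  dot_cube p q = if p == q then 3%:R else 0.
Proof.
move=> hp hq; have [p3 p1 pu pJ] := prim_cubeP hp.
case: eqP => [<- | /eqP ne].
  by rewrite /dot_cube -exprMn (mulrC _ p) pu expr1n; ring.
rewrite (prim_cube_other hp hq ne) /dot_cube pJ.
have -> : 1 + p ^+ 2 * p ^+ 2 + p ^+ 2 ^+ 2 * p ^+ 2 ^+ 2 =
   (1 + p + p ^+ 2) + p * (p ^+ 3 - 1) + p ^+ 2 * (p ^+ 3 * p ^+ 3 - 1) by ring.
by rewrite p3 p1 mulr1 subrr !mulr0 !addr0.
Qed.

(* Three points 1, x, y of the unit circle with centroid 0 form an
   equilateral triangle: |1 + x|^2 = |y|^2 gives x + x^* = -1. *)
Lemma unitC_sum3_eq0 (x y : C) : x * x^* = 1 -> y * y^* = 1 -> 1 + x + y = 0 ->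
  prim_cube x /\ y = x ^+ 2.
Proof.
move=> hx hy h; have ey : y = - 1 - x by rewrite -[y]subr0 -h; ring.
have x_re : x + x^* = -1.
  have : x + x^* = y * y^* - 1 - x * x^* by rewrite ey rmorphB rmorphN rmorph1; ring.
  by rewrite hx hy => ->; ring.
have x_quad : x ^+ 2 + x + 1 = 0.
  have -> : x ^+ 2 + x + 1 = x * (x + x^*) - x * x^* + x + 1 by ring.
  by rewrite x_re hx; ring.
split; last by rewrite ey -[x ^+ 2]subr0 -x_quad; ring.
have : (x - w ^+ 2) * (x - w ^+ 4) = 0.
  have -> : (x - w ^+ 2) * (x - w ^+ 4) =
     (x ^+ 2 + x + 1) - x * (1 + w ^+ 2 + w ^+ 4) + (w ^+ 6 - 1) by ring.
  by rewrite x_quad cube_roots_sum w_exp6; ring.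
by move/eqP; rewrite mulf_eq0 !subr_eq0 => /orP [] /eqP; [left | right].
Qed.

(* Two columns whose three entries on each half are (1, x, x^2) and
   u (1, y, y^2): orthogonality forces y to vary with x, and when x agrees
   the phases u, u' to be opposite. *)
Lemma dot_cube_orthogonal (x x' y y' u u' : C) :
  prim_cube x -> prim_cube x' -> prim_cube y -> prim_cube y' ->
  u * u^* = 1 -> u' * u'^* = 1 -> dot_cube x x' + u^* * u' * dot_cube y y' = 0 ->
  (x = x' -> y = y' /\ u' = - u) /\ (x != x' -> y != y').
Proof.
move=> cx cx' cy cy' hu hu'; rewrite (dot_cubeE cx cx') (dot_cubeE cy cy').
have three : (3%:R : C) != 0 by rewrite pnatr_eq0.
have uu' : u^* * u' != 0 by rewrite mulf_neq0 // unitC_neq0 // unitC_conj.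
case: eqP => [ex | nx]; case: eqP => [ey | ny] => E.
- split=> // _; split=> //.
  have : 3%:R * (u^* * u' + 1) = 0 by rewrite -[RHS]E; ring.
  move/eqP; rewrite mulf_eq0 (negPf three) /= addr_eq0 => /eqP h.
  by rewrite -[u']mul1r -hu -mulrA h mulrN1.
- by move: E; rewrite mulr0 addr0 => /eqP; rewrite (negPf three).
- by move: E; rewrite add0r => /eqP; rewrite mulf_eq0 (negPf three) (negPf uu').
- by split=> // _; apply/eqP.
Qed.

End PrimitiveSixthRoot.

Lemma uniq_cat_sep (T : eqType) (P : pred T) (s1 s2 : seq T) :
  uniq s1 -> uniq s2 -> all P s1 -> ~~ has P s2 -> uniq (s1 ++ s2).
Proof.
move=> u1 u2 P1 P2; rewrite cat_uniq u1 u2 andbT; apply/hasPn => y /(hasPn P2).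
by apply: contra => /(allP P1).
Qed.

Lemma nth_ord_inj (T : eqType) (x0 : T) (n : nat) (s : seq T) :
  uniq s -> size s = n -> injective (fun r : 'I_n => nth x0 s r).
Proof. by move=> us ss r r' /eqP; rewrite nth_uniq ?ss // => /eqP /val_inj. Qed.

Lemma card2_pair (T : finType) (A : {set T}) :
  #|A| = 2%N -> exists x y, [/\ x \in A, y \in A & x != y].
Proof.
rewrite cardE; have := enum_uniq (mem A); have := mem_enum (mem A).
case: (enum (mem A)) => [|x [|y [|? ?]]] // A_enum uxy _.
exists x, y; split; rewrite -?A_enum ?in_cons ?eqxx ?orbT //.
by move: uxy; rewrite /= in_cons in_nil orbF andbT.
Qed.

Lemma card_le2 (T : finType) (A : {set T}) :
  (forall x y z, x \in A -> y \in A -> z \in A -> x != y -> x != z -> y != z -> False) ->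
  (#|A| <= 2)%N.
Proof.
move=> no3; rewrite leqNgt; apply/negP; rewrite cardE.
have := enum_uniq (mem A); have := mem_enum (mem A).
case: (enum (mem A)) => [|x [|y [|z s]]] // A_enum /=.
rewrite !in_cons !negb_or => /andP [/andP [xy /andP [xz _]] /andP [/andP [yz _] _]] _.
by apply: (no3 x y z) => //; rewrite -A_enum !in_cons eqxx ?orbT.
Qed.

(* The entries of exp(i R(a, b)), with e1 = exp(i a) and e2 = exp(i b). *)
Definition Rab_phase (C : ringType) (e1 e2 : C) (r k : 'I_6) : C :=
  if odd r then
    (if (val k == 1%N) || (val k == 4%N) then e1
     else if (val k == 2%N) || (val k == 5%N) then e2 else 1)
  else 1.

Section NormalizedMatrix.
Variable C : numClosedFieldType.
Variable w : C.
Hypothesis w3 : w ^+ 3 = -1.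
Hypothesis w2_neq1 : w ^+ 2 != 1.
Variable G : 'M[C]_6.
Variables a b : 'I_6.
Hypothesis a_neq_b : a != b.
Hypothesis G_unit : forall i j, G i j * (G i j)^* = 1.
Hypothesis G_ortho : forall j k, j != k -> \sum_i (G i j)^* * G i k = 0.
Hypothesis G_col_a : forall i, G i a = 1.
Hypothesis G_row0 : forall j, G 0 j = 1.
Hypothesis G_col_b : forall i, G i b = 1 \/ G i b = -1.

Lemma card_other_columns : #|[set c | (c != a) && (c != b)]| = 4%N.
Proof.
have -> : [set c | (c != a) && (c != b)] = ~: [set a; b].
  by apply/setP => c; rewrite !inE negb_or.
by rewrite cardsCs setCK cards2 a_neq_b card_ord.
Qed.

Lemma sum_col c : c != a -> \sum_i G i c = 0.
Proof.
move=> ca; rewrite -[RHS](G_ortho (j := a) (k := c)) 1?eq_sym //.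
by apply: eq_bigr => i _; rewrite G_col_a rmorph1 mul1r.
Qed.

(* The rows are listed in the order they take in F_6, whose column 3 is ((-1)^r)_r. *)
Lemma sign_column_split : exists t1 t2 b0 b1 b2 : 'I_6,
  [/\ uniq [:: 0; b0; t1; b1; t2; b2], G t1 b = 1, G t2 b = 1 &
      [/\ G b0 b = -1, G b1 b = -1 & G b2 b = -1]].
Proof.
pose T := [set i | G i b == 1].
have G_T i : i \in T -> G i b = 1 by rewrite inE => /eqP.
have G_nT i : i \notin T -> G i b = -1.
  by rewrite inE; case: (G_col_b i) => ->; rewrite ?eqxx.
have card_T : #|T| = 3%N.
  have b_neq_a : b != a by rewrite eq_sym.
  have := sum_col b_neq_a.
  rewrite (bigID (mem T)) /= [X in X + _](eq_bigr (fun=> 1)) => [|i /G_T //].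
  rewrite [X in _ + X](eq_bigr (fun=> -1)) => [|i /G_nT //].
  rewrite !sumr_const => /eqP; rewrite addr_eq0 -mulNrn opprK eqr_nat => /eqP.
  have -> : #|(fun i => i \notin T)| = #|~: T| by apply: eq_card => i; rewrite inE.
  have := cardsC T; rewrite card_ord => + hc; rewrite -hc => h.
  by apply: double_inj; rewrite -addnn.
have T0 : 0 \in T by rewrite inE G_row0.
have card_T0 : #|T :\ 0| = 2%N by move: (cardsD1 0 T); rewrite T0 card_T => -[].
have card_nT : #|~: T| = 3%N by move: (cardsC T); rewrite card_ord card_T => -[].
move: card_T0 card_nT; rewrite !cardE.
have := mem_enum (mem (T :\ 0)); have := enum_uniq (mem (T :\ 0)).
have := mem_enum (mem (~: T)); have := enum_uniq (mem (~: T)).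
case: (enum (mem (T :\ 0))) => [|t1 [|t2 [|? ?]]] //.
case: (enum (mem (~: T))) => [|x0 [|x1 [|x2 [|? ?]]]] // ux nT_enum ut T0_enum _ _.
have /setD1P [t1_0 t1_T] : t1 \in T :\ 0 by rewrite -T0_enum !in_cons eqxx.
have /setD1P [t2_0 t2_T] : t2 \in T :\ 0 by rewrite -T0_enum !in_cons eqxx orbT.
have x_nT x : x \in [:: x0; x1; x2] -> x \notin T by rewrite -in_setC nT_enum.
exists t1, t2, x0, x1, x2; split; try exact: G_T.
- suff /perm_uniq <- : perm_eq ([:: 0; t1; t2] ++ [:: x0; x1; x2])
                              [:: 0; x0; t1; x1; t2; x2].
    apply: (@uniq_cat_sep _ (mem T)) => //; last by apply/hasPn => x /x_nT.
    + rewrite /= !inE !negb_or eq_sym t1_0 eq_sym t2_0 /=.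
      by move: ut; rewrite /= inE andbT.
    + by rewrite /= T0 t1_T t2_T.
  by apply/seq.permP => p /=; ring.
- by split; apply: G_nT; rewrite x_nT // !in_cons eqxx ?orbT.
Qed.

Section SignedRows.
Variables t1 t2 b0 b1 b2 : 'I_6.
Hypothesis rows_uniq : uniq [:: 0; b0; t1; b1; t2; b2].
Hypotheses (G_t1 : G t1 b = 1) (G_t2 : G t2 b = 1).
Hypotheses (G_b0 : G b0 b = -1) (G_b1 : G b1 b = -1) (G_b2 : G b2 b = -1).

Lemma sum_rows (F : 'I_6 -> C) :
  \sum_i F i = F 0 + (F b0 + (F t1 + (F b1 + (F t2 + (F b2 + 0))))).
Proof. by rewrite (big_uniq_enum F rows_uniq) ?card_ord // !big_cons big_nil. Qed.

Lemma half_column_sums c : c != a -> c != b ->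
  1 + G t1 c + G t2 c = 0 /\ G b0 c + G b1 c + G b2 c = 0.
Proof.
move=> ca cb; have := G_ortho (j := b) (k := c); rewrite eq_sym cb.
move=> /(_ isT); move: (sum_col ca); rewrite !sum_rows !G_row0 G_t1 G_t2 G_b0 G_b1 G_b2.
rewrite rmorphN !rmorph1 => sum_a sum_b.
have half (z : C) : 2%:R * z = 0 -> z = 0.
  by move/eqP; rewrite mulf_eq0 pnatr_eq0 => /eqP.
split; apply: half.
  by have := congr2 +%R sum_a sum_b; rewrite !addr0 => <-; ring.
by have := congr2 (fun u v => u - v) sum_a sum_b; rewrite !addr0 subr0 => <-; ring.
Qed.

Lemma column_shape c : c != a -> c != b ->
  [/\ prim_cube w (G t1 c), G t2 c = G t1 c ^+ 2, prim_cube w (G b1 c * (G b0 c)^*),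
      G b1 c = G b0 c * (G b1 c * (G b0 c)^*) &
      G b2 c = G b0 c * (G b1 c * (G b0 c)^*) ^+ 2].
Proof.
move=> ca cb; have [top bot] := half_column_sums ca cb.
have [cube_t1 e_t2] := unitC_sum3_eq0 w3 w2_neq1 (G_unit t1 c) (G_unit t2 c) top.
have uu := G_unit b0 c.
have bot' : 1 + G b1 c * (G b0 c)^* + G b2 c * (G b0 c)^* = 0.
  by rewrite -[RHS](mul0r (G b0 c)^*) -bot -[1]uu; ring.
have [cube_b1 e_b2] := unitC_sum3_eq0 w3 w2_neq1
  (unitC_mul (G_unit b1 c) (unitC_conj uu)) (unitC_mul (G_unit b2 c) (unitC_conj uu)) bot'.
split=> //; last rewrite -e_b2; by rewrite mulrCA uu mulr1.
Qed.

Lemma columns_orthogonal c c' : c != a -> c != b -> c' != a -> c' != b -> c != c' ->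
  dot_cube (G t1 c) (G t1 c') + (G b0 c)^* * G b0 c' *
    dot_cube (G b1 c * (G b0 c)^*) (G b1 c' * (G b0 c')^*) = 0.
Proof.
move=> ca cb ca' cb' cc'.
have [_ e_t2 _ e_b1 e_b2] := column_shape ca cb.
have [_ e_t2' _ e_b1' e_b2'] := column_shape ca' cb'.
have := G_ortho cc'; rewrite sum_rows !G_row0.
move: e_t2 e_b1 e_b2 e_t2' e_b1' e_b2'.
move: (G b1 c * (G b0 c)^*) (G b1 c' * (G b0 c')^*) => y y'.
move: (G t1 c) (G t1 c') (G b0 c) (G b0 c') => x x' u u'.
move=> -> -> -> -> -> -> <-.
by rewrite /dot_cube !rmorphM ?rmorphXn rmorph1; ring.
Qed.

Section Oriented.
Variable c0 : 'I_6.
Hypotheses (c0_a : c0 != a) (c0_b : c0 != b).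
Hypothesis oriented : G b1 c0 * (G b0 c0)^* = G t1 c0.

Lemma lower_phase c : c != a -> c != b -> G b1 c * (G b0 c)^* = G t1 c.
Proof.
move=> ca cb; have [-> // | cc0] := eqVneq c c0.
have [cube_x _ cube_y _ _] := column_shape ca cb.
have [cube_x0 _ cube_y0 _ _] := column_shape c0_a c0_b.
have [same_x diff_x] := dot_cube_orthogonal w3 w2_neq1 cube_x cube_x0 cube_y cube_y0
  (G_unit b0 c) (G_unit b0 c0) (columns_orthogonal ca cb c0_a c0_b cc0).
have [ex | nx] := eqVneq (G t1 c) (G t1 c0).
  by rewrite (same_x ex).1 oriented ex.
have ny : G t1 c0 != G b1 c * (G b0 c)^* by rewrite -oriented eq_sym diff_x.
rewrite (prim_cube_other w3 cube_x0 cube_y ny).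
by rewrite (prim_cube_other w3 cube_x0 cube_x) 1?eq_sym.
Qed.

Lemma equal_top_opposite c c' :
  c != a -> c != b -> c' != a -> c' != b -> c != c' ->
  G t1 c = G t1 c' -> G b0 c' = - G b0 c.
Proof.
move=> ca cb ca' cb' cc' ex.
have [cube_x _ cube_y _ _] := column_shape ca cb.
have [cube_x' _ cube_y' _ _] := column_shape ca' cb'.
have [same_x _] := dot_cube_orthogonal w3 w2_neq1 cube_x cube_x' cube_y cube_y'
  (G_unit b0 c) (G_unit b0 c') (columns_orthogonal ca cb ca' cb' cc').
exact: (same_x ex).2.
Qed.

Lemma card_top_class (p : C) :
  (#|[set c | [&& c != a, c != b & G t1 c == p]]| <= 2)%N.
Proof.
apply: card_le2 => c c' c''; rewrite !inE.
move=> /and3P [ca cb /eqP ep] /and3P [ca' cb' /eqP ep'] /and3P [ca'' cb'' /eqP ep''].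
move=> cc' cc'' c'c''; rewrite -ep' in ep; rewrite -ep'' in ep'.
have u' := equal_top_opposite ca cb ca' cb' cc' ep.
have u'' := equal_top_opposite ca' cb' ca'' cb'' c'c'' ep'.
have := equal_top_opposite ca cb ca'' cb'' cc'' (etrans ep ep').
rewrite u'' u' opprK => /eqP; rewrite -subr_eq0 opprK -mulr2n -mulr_natr mulf_eq0.
by rewrite pnatr_eq0 orbF (negPf (unitC_neq0 (G_unit b0 c))).
Qed.

Lemma column_classes : exists c1 c2 c4 c5 : 'I_6,
  [/\ uniq [:: a; c1; c2; b; c4; c5], G t1 c1 = w ^+ 2, G t1 c4 = w ^+ 2,
      G t1 c2 = w ^+ 4 & G t1 c5 = w ^+ 4].
Proof.
pose D := [set c | (c != a) && (c != b)].
pose P := [set c | [&& c != a, c != b & G t1 c == w ^+ 2]].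
pose Q := [set c | [&& c != a, c != b & G t1 c == w ^+ 4]].
have P_D : P \subset D by apply/subsetP => c; rewrite !inE => /and3P [-> ->].
have Q_D : Q \subset D by apply/subsetP => c; rewrite !inE => /and3P [-> ->].
have PQ_D : P :|: Q = D.
  apply/setP => c; rewrite !inE; case ca: (c != a); case cb: (c != b) => //=.
  by have [[] -> _ _ _ _] := column_shape ca cb; rewrite eqxx ?orbT.
have P_nQ c : c \in Q -> c \notin P.
  rewrite !inE => /and3P [_ _ /eqP ->].
  by rewrite [_ == w ^+ 2]eq_sym (negPf (w2_neq_w4 w3 w2_neq1)) !andbF.
have PQ0 : P :&: Q = set0.
  apply/setP => c; rewrite in_setI in_set0 andbC.
  by case: (boolP (c \in Q)) => // /P_nQ /negPf.
have card_P : #|P| = 2%N.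
  have := cardsUI P Q; rewrite PQ_D PQ0 cards0 card_other_columns addn0.
  have : (#|P| <= 2)%N := card_top_class (w ^+ 2).
  have : (#|Q| <= 2)%N := card_top_class (w ^+ 4).
  lia.
have card_Q : #|Q| = 2%N.
  have := cardsUI P Q; rewrite PQ_D PQ0 cards0 card_other_columns addn0 card_P.
  lia.
have [c1 [c4 [P1 P4 c14]]] := card2_pair card_P.
have [c2 [c5 [Q2 Q5 c25]]] := card2_pair card_Q.
exists c1, c2, c4, c5; split; last 4 first.
- by move: P1; rewrite inE => /and3P [_ _ /eqP].
- by move: P4; rewrite inE => /and3P [_ _ /eqP].
- by move: Q2; rewrite inE => /and3P [_ _ /eqP].
- by move: Q5; rewrite inE => /and3P [_ _ /eqP].
suff /perm_uniq <- : perm_eq (([:: c1; c4] ++ [:: c2; c5]) ++ [:: a; b])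
                            [:: a; c1; c2; b; c4; c5].
  apply: (@uniq_cat_sep _ (mem D)).
  - apply: (@uniq_cat_sep _ (mem P)).
    + by rewrite /= inE andbT.
    + by rewrite /= inE andbT.
    + by rewrite /= P1 P4.
    + by rewrite /= (negPf (P_nQ _ Q2)) (negPf (P_nQ _ Q5)).
  - by rewrite /= inE andbT a_neq_b.
  - by rewrite /= (subsetP P_D _ P1) (subsetP P_D _ P4) (subsetP Q_D _ Q2)
                 (subsetP Q_D _ Q5).
  - by rewrite /= !inE !eqxx !andbF.
by apply/seq.permP => p /=; ring.
Qed.

Let rho (r : 'I_6) : 'I_6 := nth 0 [:: 0; b0; t1; b1; t2; b2] r.

Lemma column_formula c (z e : C) : c != a -> c != b ->
  G t1 c = z ^+ 2 -> G b0 c = z * e ->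
  forall r : 'I_6, G (rho r) c = z ^+ r * (if odd r then e else 1).
Proof.
move=> ca cb e_t1 e_b0 r.
have [_ e_t2 _ e_b1 e_b2] := column_shape ca cb.
rewrite (lower_phase ca cb) e_t1 in e_t2 e_b1 e_b2.
case: r => [[|[|[|[|[|[|r]]]]]] hr] //=;
  rewrite ?G_row0 ?e_t1 ?e_t2 ?e_b1 ?e_b2 ?e_b0; ring.
Qed.

Lemma oriented_F6_form : exists (rho kap : 'I_6 -> 'I_6) (e1 e2 : C),
  [/\ injective rho, injective kap, e1 * e1^* = 1, e2 * e2^* = 1 &
      forall r k, G (rho r) (kap k) = w ^+ (r * k) * Rab_phase e1 e2 r k].
Proof.
have [c1 [c2 [c4 [c5 [cols_uniq x1 x4 x2 x5]]]]] := column_classes.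
have := cols_uniq; rewrite /= !inE !negb_or -!andbA.
move=> /and5P [a1 a2 _ a4 /and5P [a5 _ c1b c14 /and5P [_ c2b _ c25 /and4P [b4 b5 _ _]]]].
move: a1 a2 a4 a5 b4 b5; rewrite ![a == _]eq_sym ![b == _]eq_sym => a1 a2 a4 a5 b4 b5.
have w_unit := w_unit w3.
have w4 : w ^+ 4 = - w by rewrite (exprS _ 3) w3 mulrN1.
have w5 : w ^+ 5 = - w ^+ 2 by rewrite (exprD _ 2 3) w3 mulrN1.
pose e1 := G b0 c1 * w^*; pose e2 := G b0 c2 * (w ^+ 2)^*.
have u1 : G b0 c1 = w * e1 by rewrite /e1 mulrCA w_unit mulr1.
have u2 : G b0 c2 = w ^+ 2 * e2 by rewrite /e2 mulrCA (w_expX_unit w3) mulr1.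
have u4 : G b0 c4 = w ^+ 4 * e1.
  by rewrite (equal_top_opposite a1 c1b a4 b4 c14 (etrans x1 (esym x4))) u1 w4 mulNr.
have u5 : G b0 c5 = w ^+ 5 * e2.
  by rewrite (equal_top_opposite a2 c2b a5 b5 c25 (etrans x2 (esym x5))) u2 w5 mulNr.
have col c k e : c != a -> c != b -> G t1 c = w ^+ (2 * k) -> G b0 c = w ^+ k * e ->
    forall r : 'I_6, G (rho r) c = w ^+ (r * k) * (if odd r then e else 1).
  move=> ca cb et eb r; rewrite mulnC exprM; apply: column_formula => //.
  by rewrite et mulnC exprM.
exists rho, (fun k : 'I_6 => nth 0 [:: a; c1; c2; b; c4; c5] k), e1, e2; split.
- exact: nth_ord_inj rows_uniq _.
- exact: nth_ord_inj cols_uniq _.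
- exact: unitC_mul (G_unit _ _) (unitC_conj w_unit).
- exact: unitC_mul (G_unit _ _) (unitC_conj (w_expX_unit w3 2)).
move=> r [[|[|[|[|[|[|k]]]]]] hk] //=; rewrite /Rab_phase /=.
- by rewrite G_col_a muln0 expr0 mul1r; case: odd.
- exact: col.
- exact: col.
- rewrite mulnC exprM w3.
  case: r => [[|[|[|[|[|[|r]]]]]] hr] //=;
    by rewrite ?G_row0 ?G_t1 ?G_t2 ?G_b0 ?G_b1 ?G_b2; ring.
- by apply: col; rewrite // x4 -[(2 * 4)%N]/(6 + 2)%N w_expD6.
- by apply: col; rewrite // x5 -[(2 * 5)%N]/(6 + 4)%N w_expD6.
Qed.

End Oriented.
End SignedRows.

Lemma oriented_rows c0 : c0 != a -> c0 != b -> exists t1 t2 b0 b1 b2 : 'I_6,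
  [/\ uniq [:: 0; b0; t1; b1; t2; b2], G t1 b = 1, G t2 b = 1,
      [/\ G b0 b = -1, G b1 b = -1 & G b2 b = -1] &
      G b1 c0 * (G b0 c0)^* = G t1 c0].
Proof.
move=> c0a c0b.
have [t1 [t2 [b0 [b1 [b2 [ru Gt1 Gt2 [Gb0 Gb1 Gb2]]]]]]] := sign_column_split.
have [e | ne] := eqVneq (G b1 c0 * (G b0 c0)^*) (G t1 c0).
  by exists t1, t2, b0, b1, b2.
have [cube_x _ cube_y _ e_b2] := column_shape ru Gt1 Gt2 Gb0 Gb1 Gb2 c0a c0b.
exists t1, t2, b0, b2, b1; split=> //.
  suff /perm_uniq <- : perm_eq [:: 0; b0; t1; b1; t2; b2] [:: 0; b0; t1; b2; t2; b1] by [].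
  by apply/seq.permP => p /=; ring.
by rewrite e_b2 mulrAC G_unit mul1r (prim_cube_other w3 cube_y cube_x ne).
Qed.

Lemma normalized_F6_form : exists (rho kap : 'I_6 -> 'I_6) (e1 e2 : C),
  [/\ injective rho, injective kap, e1 * e1^* = 1, e2 * e2^* = 1 &
      forall r k, G (rho r) (kap k) = w ^+ (r * k) * Rab_phase e1 e2 r k].
Proof.
have [c0] : exists c0, c0 \in [set c | (c != a) && (c != b)].
  by apply/set0Pn; rewrite -card_gt0 card_other_columns.
rewrite inE => /andP [c0a c0b].
have [t1 [t2 [b0 [b1 [b2 [ru Gt1 Gt2 [Gb0 Gb1 Gb2] or0]]]]]] := oriented_rows c0a c0b.
exact (oriented_F6_form ru Gt1 Gt2 Gb0 Gb1 Gb2 c0a c0b or0).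
Qed.

End NormalizedMatrix.

Section ComplexHadamard.
Variable R : realType.
Local Notation C := R[i].

Lemma unimodularE (z : C) : unimodular z <-> z * z^* = 1.
Proof. exact: unitC_norm. Qed.

Lemma expiD (s t : R) : expi (s + t) = expi s * expi t.
Proof.
by rewrite /expi cosD sinD; apply/eqP; rewrite eq_complex /= !eqxx /=; apply/eqP; ring.
Qed.

Lemma expiMn (n : nat) (t : R) : expi (n%:R * t) = expi t ^+ n.
Proof.
elim: n => [|n IH]; first by rewrite mul0r expr0 /expi cos0 sin0.
by rewrite -addn1 natrD mulrDl mul1r expiD IH exprD expr1.
Qed.

Lemma expi_surj (z : C) : z * z^* = 1 -> exists t, expi t = z.
Proof.
case: z => x y /eqP; rewrite eq_complex /= => /andP [/eqP h _].
have xy1 : x ^+ 2 + y ^+ 2 = 1 by rewrite -h; ring.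
have x_bound : -1 <= x <= 1 by apply/andP; split; nra.
have [_ cos_acos] := acos_def x_bound.
have y2 : 1 - x ^+ 2 = y ^+ 2 by rewrite -xy1; ring.
have := sin_acos x_bound; rewrite y2 sqrtr_sqr => sin_acos.
have [y_ge0 | y_lt0] := lerP 0 y.
  by exists (acos x); rewrite /expi cos_acos sin_acos ger0_norm.
by exists (- acos x); rewrite /expi cosN sinN cos_acos sin_acos ltr0_norm // opprK.
Qed.

Definition w6 : C := expi (2%:R * pi / 6%:R).

Lemma F6E (j k : 'I_6) : F6 R j k = w6 ^+ (j * k).
Proof. by rewrite /F6 mxE /w6 -expiMn natrM; congr expi; ring. Qed.

Lemma w6_exp3 : w6 ^+ 3 = -1.
Proof.
rewrite /w6 -expiMn (_ : _ * _ = pi); last by field.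
by rewrite /expi cospi sinpi; apply/eqP; rewrite eq_complex /= oppr0 !eqxx.
Qed.

Lemma w6_exp2_neq1 : w6 ^+ 2 != 1.
Proof.
apply/eqP => w2; have : w6 ^+ 3 = w6 by rewrite exprS w2 mulr1.
rewrite w6_exp3 /w6 /expi => -[cos_w _].
have : 0 < cos (2%:R * pi / 6%:R :> R).
  by apply: cos_gt0_pihalf; have := pi_gt0 R => pi_gt0; apply/andP; split; lra.
by rewrite -cos_w; lra.
Qed.

Lemma F6_dephaseE (s t : R) (r k : 'I_6) :
  F6_dephase (Rab s t) r k = w6 ^+ (r * k) * Rab_phase (expi s) (expi t) r k.
Proof.
have expi0 : expi 0 = 1 :> C by rewrite /expi cos0 sin0.
rewrite /F6_dephase mxE F6E /Rab mxE /Rab_phase; congr (_ * _).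
by case: odd => //; do 2!case: ifP => _ //.
Qed.

Lemma F6_dephase_tr (s t : R) : F6_dephase (Rab s t)^T = (F6_dephase (Rab s t))^T.
Proof. by apply/matrixP => r k; rewrite !mxE mulnC. Qed.

Lemma equiv_mxE n (d e : 'rV[C]_n) (s t : 'S_n) (K : 'M[C]_n) i j :
  (diag_mx d *m perm_mx s *m K *m perm_mx t *m diag_mx e) i j
   = d 0 i * K (s i) ((t^-1)%g j) * e 0 j.
Proof.
rewrite mul_mx_diag mxE -[t]invgK -col_permE mxE -mulmxA -row_permE mul_diag_mx.
by rewrite !mxE !invgK.
Qed.

Lemma hadamard_equivP n (K H : 'M[C]_n) :
  hadamard_equiv K H <->
  exists (d e : 'I_n -> C) (s t : 'S_n),
    [/\ forall i, d i * (d i)^* = 1, forall j, e j * (e j)^* = 1 &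
        forall i j, H i j = d i * K (s i) (t j) * e j].
Proof.
split.
  case=> _ [_ [_ [_ [[d1 [d1_unit ->]] [d2 [d2_unit ->]] [s1 ->] [s2 ->] ->]]]].
  exists (fun i => d1 0 i), (fun j => d2 0 j), s1, (s2^-1)%g.
  by split=> [i|j|i j]; rewrite ?equiv_mxE //; apply/unimodularE.
case=> d [e [s [t [d_unit e_unit HE]]]].
exists (diag_mx (\row_i d i)), (diag_mx (\row_j e j)), (perm_mx s), (perm_mx (t^-1)%g).
split; [by exists (\row_i d i); split=> // j; rewrite mxE; apply/unimodularE
       | by exists (\row_j e j); split=> // j; rewrite mxE; apply/unimodularE
       | by exists s | by exists (t^-1)%g | ].
by apply/matrixP => i j; rewrite equiv_mxE !mxE invgK.
Qed.

Lemma hadamard_equiv_of_reindex n (K H : 'M[C]_n) (d e : 'I_n -> C)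
    (rho kap : 'I_n -> 'I_n) :
  injective rho -> injective kap ->
  (forall i, d i * (d i)^* = 1) -> (forall j, e j * (e j)^* = 1) ->
  (forall r k, H (rho r) (kap k) = d (rho r) * K r k * e (kap k)) ->
  hadamard_equiv K H.
Proof.
move=> rho_inj kap_inj d_unit e_unit HE; apply/hadamard_equivP.
exists d, e, (perm rho_inj)^-1%g, (perm kap_inj)^-1%g; split=> // i j.
have rhoK : rho ((perm rho_inj)^-1%g i) = i by rewrite -(permE rho_inj) permKV.
have kapK : kap ((perm kap_inj)^-1%g j) = j by rewrite -(permE kap_inj) permKV.
by have := HE ((perm rho_inj)^-1%g i) ((perm kap_inj)^-1%g j); rewrite rhoK kapK.
Qed.

Lemma hadamard_equiv_tr n (K H : 'M[C]_n) :
  hadamard_equiv K H -> hadamard_equiv K^T H^T.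
Proof.
case/hadamard_equivP => d [e [s [t [d_unit e_unit HE]]]].
apply: (hadamard_equiv_of_reindex (d := e) (e := d)
  (@perm_inj _ t^-1%g) (@perm_inj _ s^-1%g)) => //.
by move=> r k; rewrite !mxE HE !permKV; ring.
Qed.

(* Orthogonal columns with entries of modulus one make H^* H / n the identity,
   hence also H H^* / n, i.e. the rows are orthogonal. *)
Lemma is_complex_hadamard_tr n (H : 'M[C]_n) :
  is_complex_hadamard H -> is_complex_hadamard H^T.
Proof.
case=> H_unimod H_ortho; split=> [i l | j k jk]; first by rewrite mxE.
have n_neq0 : (n%:R : C) != 0 by rewrite pnatr_eq0 -lt0n (leq_ltn_trans _ (ltn_ord j)).
have H_unit x y : (H x y)^* * H x y = 1 by rewrite mulrC; apply/unimodularE.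
pose M := \matrix_(i, j) ((n%:R)^-1 * (H j i)^*).
have MH : M *m H = 1%:M.
  apply/matrixP => i l; rewrite !mxE.
  have [<- | il] := eqVneq i l.
    under eq_bigr do rewrite mxE -mulrA H_unit mulr1.
    by rewrite sumr_const card_ord -[LHS]mulr_natr mulVf.
  under eq_bigr do rewrite mxE -mulrA.
  by rewrite -mulr_sumr H_ortho // mulr0.
have := congr1 (fun A : 'M[C]_n => A j k) (mulmx1C MH); rewrite !mxE (negPf jk).
under eq_bigr do rewrite mxE mulrCA.
rewrite -mulr_sumr => /eqP; rewrite mulf_eq0 invr_eq0 (negPf n_neq0) /= => /eqP rows_ortho.
rewrite (eq_bigr (fun i => (H j i * (H k i)^*)^*)) => [|i _].
  by rewrite -rmorph_sum rows_ortho rmorph0.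
by rewrite !mxE rmorphM /= conjCK mulrC.
Qed.

Lemma dephased_tr n (H : 'M[C]_n.+1) : dephased H^T = (dephased H)^T.
Proof. by apply/matrixP => i j; rewrite !mxE; ring. Qed.

Lemma ER_colC n (K : 'M[C]_n) a b : ER_col K a b -> ER_col K b a.
Proof.
case/andP => ab /forallP ER; apply/andP; split; first by rewrite eq_sym.
apply/forallP => j; rewrite -[K j a]conjCK -rmorphM mulrC.
by case/orP: (ER j) => /eqP ->; rewrite ?rmorph1 ?rmorphN1 eqxx ?orbT.
Qed.

Lemma eta_c_neq0P n (H : 'M[C]_n.+1) :
  eta_c H <> 0%N <-> exists a b, ER_col (dephased H) a b.
Proof.
split=> [eta_neq0 | [a [b ab_ER]]].
  have [/existsP [a /existsP [b ab_ER]] | no_pair] :=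
    boolP [exists a, exists b, ER_col (dephased H) a b]; first by exists a, b.
  exfalso; apply: eta_neq0; apply/eqP; rewrite -leqn0; apply/bigmax_leqP => S.
  case/andP => /forallP S_ER _; rewrite leqn0 cards_eq0; apply/eqP/setP => p.
  rewrite in_set0; apply/negP => /[dup] /(implyP (S_ER p)) /andP [_ p_ER] _.
  by move: no_pair; rewrite negb_exists => /forallP /(_ p.1);
    rewrite negb_exists => /forallP /(_ p.2); rewrite p_ER.
wlog ab : a b ab_ER / (a < b)%N.
  move=> hwlog; case: (ltngtP a b) => [|ba|/val_inj eab]; first exact: hwlog.
    exact: hwlog (ER_colC ab_ER) ba.
  by move: ab_ER; rewrite /ER_col eab eqxx.
apply/eqP; rewrite -lt0n.
have <- : #|[set (a, b)]| = 1%N by rewrite cards1.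
apply: (leq_bigmax_cond (F := fun S : {set 'I_n.+1 * 'I_n.+1} => #|S|)).
apply/andP; split; apply/forallP => p; apply/implyP; rewrite in_set1 => /eqP -> //=.
  by rewrite ab ab_ER.
by apply/forallP => q; apply/implyP; rewrite in_set1 => /eqP ->; rewrite eqxx.
Qed.

Lemma eta_r_tr n (H : 'M[C]_n.+1) : eta_r H = eta_c H^T.
Proof.
rewrite /eta_r /eta_c dephased_tr.
have -> // : ER_row (dephased H) = ER_col (dephased H)^T.
do 2!apply: functional_extensionality => ?.
by congr (_ && _); apply: eq_forallb => j; rewrite !mxE.
Qed.

Section NormalizeColumn.
Variables (n : nat) (H : 'M[C]_n.+1) (a : 'I_n.+1).
Hypothesis H_unit : forall i j, H i j * (H i j)^* = 1.

(* Row phases make column a constant 1, then column phases make row 0 constant 1. *)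
Definition normalize_col : 'M[C]_n.+1 :=
  \matrix_(i, j) (H i j * (H i a)^* * (H 0 j)^* * H 0 a).

Lemma normalize_col_unit i j : normalize_col i j * (normalize_col i j)^* = 1.
Proof. by rewrite mxE !unitC_mul ?unitC_conj. Qed.

Lemma normalize_col_ortho j k :
  \sum_i (H i j)^* * H i k = 0 -> \sum_i (normalize_col i j)^* * normalize_col i k = 0.
Proof.
move=> H_ortho; rewrite (eq_bigr (fun i => (H 0 j * (H 0 a)^* * (H 0 k)^* * H 0 a) *
                                           ((H i j)^* * H i k))) => [|i _].
  by rewrite -mulr_sumr H_ortho mulr0.
rewrite !mxE !rmorphM /= !conjCK.
by apply: (mul_unitC_l (H_unit i a)); ring.
Qed.

Lemma normalize_col_a i : normalize_col i a = 1.
Proof.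
by rewrite mxE; apply: (mul_unitC_l (H_unit i a)); apply: (mul_unitC_l (H_unit 0 a)); ring.
Qed.

Lemma normalize_col_row0 j : normalize_col 0 j = 1.
Proof.
by rewrite mxE; apply: (mul_unitC_l (H_unit 0 j)); apply: (mul_unitC_l (H_unit 0 a)); ring.
Qed.

Lemma normalize_col_dephased i b :
  ((dephased H) i a)^* * (dephased H) i b = normalize_col i b.
Proof.
rewrite !mxE !rmorphM /= !conjCK.
by apply: (mul_unitC_l (H_unit i 0)); apply: (mul_unitC_l (H_unit 0 0)); ring.
Qed.

Lemma normalize_colE i j : H i j = H i a * normalize_col i j * (H 0 j * (H 0 a)^*).
Proof.
rewrite mxE; apply: esym; apply: (mul_unitC_l (H_unit i a)).
by apply: (mul_unitC_l (H_unit 0 j)); apply: (mul_unitC_l (H_unit 0 a)); ring.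
Qed.

End NormalizeColumn.

Lemma ER_col_F6_equiv (H : 'M[C]_6) a b :
  is_complex_hadamard H -> ER_col (dephased H) a b ->
  exists s t, hadamard_equiv (F6_dephase (Rab s t)) H.
Proof.
case=> H_unimod H_ortho /andP [ab /forallP ab_ER].
have H_unit i j : H i j * (H i j)^* = 1 by apply/unimodularE.
have G_col_b i : normalize_col H a i b = 1 \/ normalize_col H a i b = -1.
  by rewrite -normalize_col_dephased //; case/orP: (ab_ER i) => /eqP; [left | right].
have [rho [kap [e1 [e2 [rho_inj kap_inj e1_unit e2_unit GE]]]]] :=
  normalized_F6_form w6_exp3 w6_exp2_neq1 ab (normalize_col_unit a H_unit)
    (fun j k jk => normalize_col_ortho a H_unit (H_ortho j k jk))
    (normalize_col_a a H_unit) (normalize_col_row0 a H_unit) G_col_b.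
have [[s e1E] [t e2E]] := (expi_surj e1_unit, expi_surj e2_unit).
exists s, t; apply: (hadamard_equiv_of_reindex (d := fun i => H i a)
  (e := fun j => H 0 j * (H 0 a)^*) rho_inj kap_inj) => // [j|r k].
  exact: unitC_mul (unitC_conj _).
by rewrite F6_dephaseE e1E e2E -GE -normalize_colE.
Qed.

(* Columns 0 and 3 of F_6 o exp(i R(a, b)) are 1 and ((-1)^r)_r. *)
Lemma F6_equiv_ER_col (H : 'M[C]_6) s t :
  (forall i j, unimodular (H i j)) -> hadamard_equiv (F6_dephase (Rab s t)) H ->
  exists a b, ER_col (dephased H) a b.
Proof.
move=> H_unimod /hadamard_equivP [d [e [p [q [d_unit e_unit HE]]]]].
have H_unit i j : H i j * (H i j)^* = 1 by apply/unimodularE.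
pose col0 : 'I_6 := Ordinal (isT : (0 < 6)%N).
pose col3 : 'I_6 := Ordinal (isT : (3 < 6)%N).
have K_col0 r : F6_dephase (Rab s t) r col0 = 1.
  by rewrite F6_dephaseE /Rab_phase muln0 expr0 mul1r; case: odd.
have K_col3 r : F6_dephase (Rab s t) r col3 = (-1) ^+ r.
  by rewrite F6_dephaseE /Rab_phase mulnC exprM w6_exp3; case: odd; rewrite mulr1.
exists (q^-1 col0)%g, (q^-1 col3)%g; apply/andP; split.
  by apply/eqP => /perm_inj.
apply/forallP => i; rewrite normalize_col_dephased // mxE !HE !permKV !K_col0 !K_col3.
rewrite (_ : _ * _ = (-1) ^+ (p i + p 0)).
  by rewrite -signr_odd; case: odd; rewrite eqxx ?orbT.
rewrite !rmorphM /= rmorphXn rmorphN1 rmorph1 exprD.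
apply: (mul_unitC_l (d_unit i)); apply: (mul_unitC_l (d_unit 0)).
apply: (mul_unitC_l (e_unit (q^-1 col0)%g)).
by apply: (mul_unitC_l (e_unit (q^-1 col3)%g)); ring.
Qed.

Lemma F6_equiv_eta_c (H : 'M[C]_6) : is_complex_hadamard H ->
  (exists s t, hadamard_equiv (F6_dephase (Rab s t)) H) <-> eta_c H <> 0%N.
Proof.
move=> H_had; split=> [[s [t /(F6_equiv_ER_col H_had.1)]] | /eta_c_neq0P [a [b]]].
  exact: (eta_c_neq0P H).2.
exact: ER_col_F6_equiv.
Qed.

End ComplexHadamard.

Theorem proposition2 (R : realType) (H : 'M[R[i]]_6) :
  is_complex_hadamard H ->
  ((exists K : 'M[R[i]]_6, in_F6_2 K /\ hadamard_equiv K H) <->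
   (eta_c H <> 0%N \/ eta_r H <> 0%N)).
Proof.
move=> H_had; have H_had_tr := is_complex_hadamard_tr H_had.
rewrite eta_r_tr; split.
  case=> K [[s [t [-> | ->]]] KH].
    by left; apply/(F6_equiv_eta_c H_had); exists s, t.
  right; apply/(F6_equiv_eta_c H_had_tr); exists s, t.
  by rewrite -[F6_dephase (Rab s t)]trmxK -F6_dephase_tr; apply: hadamard_equiv_tr.
case=> [/(F6_equiv_eta_c H_had) | /(F6_equiv_eta_c H_had_tr)] [s [t KH]].
  by exists (F6_dephase (Rab s t)); split=> //; exists s, t; left.
exists (F6_dephase (Rab s t)^T); split; first by exists s, t; right.
by rewrite F6_dephase_tr -[H]trmxK; apply: hadamard_equiv_tr.
Qed.
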